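(* Let $n \geq 1$ be an integer. Let $\mathcal{G} = (\mathcal{V}, \mathcal{E})$ be a cycle graph with $|\mathcal{V}| = 2n$ nodes, and let $\mathcal{G}' = (\mathcal{V}', \mathcal{E}')$ be a path graph with $|\mathcal{V}'| = 2n+1$ nodes. Let $P_k$ and $P'_k$ denote the $k$-hop random walk matrices of $\mathcal{G}$ and $\mathcal{G}'$ respectively. Then for every pair of nodes $(i,j) \in \mathcal{V} \times \mathcal{V}$ there exists a pair of nodes $(i',j') \in \mathcal{V}' \times \mathcal{V}'$ such that $(P_k)_{ij} = (P'_k)_{i'j'}$ for all integers $k \geq 1$.
   Context: Graphs are finite and undirected. For a graph with adjacency matrix $A$ (with $A_{ij}=1$ if $i,j$ are adjacent and $0$ otherwise) and diagonal degree matrix $D$ (with $D_{ii} = \sum_j A_{ij}$), the $k$-hop random walk matrix is $P_k = (D^{-1}A)^k$; its $(i,j)$ entry is the probability that a simple random walk of length $k$ started at $i$ ends at $j$. A cycle graph is a graph consisting of a single cycle (all nodes distinct except that the walk returns to its start); a path graph is a graph consisting of a single simple path through all its nodes. *)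

From HB Require Import structures.
From mathcomp Require Import all_boot all_order all_algebra all_fingroup.
Set Implicit Arguments. Unset Strict Implicit. Unset Printing Implicit Defensive.
Import Order.TTheory GRing.Theory Num.Theory.
Local Open Scope ring_scope.

Definition adj_mx (R : pzRingType) (m : nat) (G : rel 'I_m) : 'M[R]_m :=
  \matrix_(i, j) (G i j)%:R.

Definition deg_mx (R : pzRingType) (m : nat) (G : rel 'I_m) : 'M[R]_m :=
  diag_mx (\row_i (\sum_j adj_mx R G i j)).

Definition rw_mx (R : fieldType) (m : nat) (G : rel 'I_m) (k : nat) : 'M[R]_m :=
  (invmx (deg_mx R G) *m adj_mx R G) ^+ k.

Definition std_cycle (m : nat) : rel 'I_m :=
  fun i j => (j == (i.+1 %% m)%N :> nat) || (i == (j.+1 %% m)%N :> nat).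

Definition std_path (m : nat) : rel 'I_m :=
  fun i j => (j == i.+1 :> nat) || (i == j.+1 :> nat).

Definition is_cycle_graph (m : nat) (G : rel 'I_m) : Prop :=
  exists s : {perm 'I_m}, forall i j, G (s i) (s j) = std_cycle i j.

Definition is_path_graph (m : nat) (G : rel 'I_m) : Prop :=
  exists s : {perm 'I_m}, forall i j, G (s i) (s j) = std_path i j.

From mathcomp Require Import all_boot all_order all_algebra all_fingroup.
From mathcomp Require Import zify.
Set Implicit Arguments. Unset Strict Implicit. Unset Printing Implicit Defensive.
Import GRing.Theory Num.Theory.
Local Open Scope ring_scope.

(* Both walks lump onto the simple random walk on the path 0 - 1 - ... - n.
   On the cycle C_2n the circular distance to the target j performs exactly
   this walk: from 0 it moves to 1, from the antipodal distance n back to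
   n - 1, and otherwise up or down with probability 1/2.  On the path P_2n+1
   the distance |x - n| to the middle vertex does the same, the middle vertex
   playing the role of 0 and the two endpoints that of n.  As the target is
   the only vertex at distance 0, the k-step probability of reaching it only
   depends on the starting distance d, so the pair (i, j) of the cycle
   corresponds to the pair (n + d, n) of the path. *)

Section Lumping.
Variable R : pzRingType.

(* [f] lumps the chain [T] onto [U] (Kemeny-Snell): the image under [f] of one
   [T]-step from [i] is distributed as one [U]-step from [f i]. *)
Definition lumping m p (T : 'M[R]_m) (U : 'M[R]_p) (f : 'I_m -> 'I_p) :=
  forall i (phi : 'I_p -> R), \sum_l T i l * phi (f l) = \sum_u U (f i) u * phi u.

Lemma lumping_expr m p (T : 'M[R]_m) (U : 'M[R]_p) f j :
  lumping T U f -> (forall i, f i = f j -> i = j) ->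
  forall k i, (T ^+ k) i j = (U ^+ k) (f i) (f j).
Proof.
move=> lumpTU fj k; elim: k => [|k IHk] i.
  have fE : (f i == f j) = (i == j) by apply/eqP/eqP => [/fj | ->].
  by rewrite !expr0 !mxE fE.
rewrite !exprS -!mulmxE !mxE; under eq_bigr => l _ do rewrite IHk.
exact: (lumpTU i (fun u => (U ^+ k) u (f j))).
Qed.

End Lumping.

Section RandomWalk.
Variable R : fieldType.

Definition degree m (G : rel 'I_m) (i : 'I_m) : R := \sum_l (G i l)%:R.

Definition trans_mx m (G : rel 'I_m) : 'M[R]_m :=
  \matrix_(i, l) ((G i l)%:R / degree G i).

Lemma rw_mx_trans m (G : rel 'I_m) k :
  (forall i, degree G i != 0) -> rw_mx R G k = trans_mx G ^+ k.
Proof.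
move=> deg_neq0; congr (_ ^+ _).
have degE i : \sum_l adj_mx R G i l = degree G i by apply: eq_bigr => l _; rewrite mxE.
have adjE : adj_mx R G = deg_mx R G *m trans_mx G.
  by apply/matrixP => i l; rewrite mul_diag_mx !mxE degE mulrC divfK.
have deg_unit : deg_mx R G \in unitmx.
  by rewrite unitmxE det_diag unitfE; apply/prodf_neq0 => i _; rewrite mxE degE.
by rewrite adjE mulKmx.
Qed.

Section Relabel.
Variables (m : nat) (G H : rel 'I_m) (s : {perm 'I_m}).
Hypothesis GsH : forall i l, G (s i) (s l) = H i l.

Lemma degree_relabel i : degree G (s i) = degree H i.
Proof.
by rewrite /degree (reindex_inj (@perm_inj _ s)); apply: eq_bigr => l _; rewrite GsH.
Qed.

Lemma lumping_relabel : lumping (trans_mx G) (trans_mx H) (s^-1)%g.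
Proof.
move=> i phi; rewrite (reindex_inj (@perm_inj _ s)) -{1}[i](permKV s).
by apply: eq_bigr => l _; rewrite !mxE GsH degree_relabel permK.
Qed.

End Relabel.
End RandomWalk.

(* [a i = b i] is allowed: [i] then has a single neighbour, which the walk
   reaches with probability 1 = 1/2 + 1/2. *)
Definition pair_nbhd m (G : rel 'I_m) (a b : nat -> nat) :=
  forall i : 'I_m, [/\ (a i < m)%N, (b i < m)%N &
    forall l : 'I_m, G i l = (l == a i :> nat) || (l == b i :> nat)].

Section Neighbours.
Local Open Scope nat_scope.

(* The two neighbours of [x] on the path 0 - 1 - ... - m; an endpoint gets its
   only neighbour twice. *)
Definition bpred x := if x == 0 then 1 else x.-1.
Definition bsucc m x := if x == m then m.-1 else x.+1.

Lemma std_path_nbhd m : 0 < m -> pair_nbhd (@std_path m.+1) bpred (bsucc m).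
Proof.
move=> m_gt0 x; have := ltn_ord x; rewrite ltnS => xm.
split=> [||l]; rewrite /std_path /bpred /bsucc; try by case: ifP; lia.
have := ltn_ord l; rewrite ltnS => lm.
case: ifP => /eqP ?; case: ifP => /eqP ?; lia.
Qed.

Definition cyc_succ m i := if i.+1 == m then 0 else i.+1.
Definition cyc_pred m i := if i == 0 then m.-1 else i.-1.

Lemma modn_cyc_succ m i : i < m -> i.+1 %% m = cyc_succ m i.
Proof.
by move=> im; rewrite /cyc_succ; case: eqP => [->|?]; rewrite ?modnn ?modn_small //; lia.
Qed.

Lemma std_cycle_nbhd m : pair_nbhd (@std_cycle m) (cyc_succ m) (cyc_pred m).
Proof.
move=> i; have im := ltn_ord i.
split=> [||l]; rewrite /cyc_succ /cyc_pred; try by case: ifP; lia.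
have lm := ltn_ord l; rewrite /std_cycle !modn_cyc_succ // /cyc_succ.
case: ifP => /eqP ?; case: ifP => /eqP ?; case: ifP => /eqP ?; lia.
Qed.

Definition cycle_offset m i j := if j <= i then i - j else i + m - j.
Definition cycle_norm m r := minn r (m - r).
Definition cycle_dist m i j := cycle_norm m (cycle_offset m i j).

Lemma cycle_dist_le n i j : cycle_dist (2 * n) i j <= n.
Proof. rewrite /cycle_dist /cycle_norm; lia. Qed.

Lemma cycle_offset_succ m i j : i < m -> j < m ->
  cycle_offset m (cyc_succ m i) j = cyc_succ m (cycle_offset m i j).
Proof.
rewrite /cycle_offset /cyc_succ => im jm.
by case: (leqP j i) => ?; case: (i.+1 =P m) => ?; (repeat case: ifP => ?); lia.
Qed.

Lemma cycle_offset_pred m i j : i < m -> j < m ->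
  cycle_offset m (cyc_pred m i) j = cyc_pred m (cycle_offset m i j).
Proof.
rewrite /cycle_offset /cyc_pred => im jm.
by case: (leqP j i) => ?; case: (i =P 0) => ?; (repeat case: ifP => ?); lia.
Qed.

Lemma cycle_norm_nbhd n r : 0 < n -> r < 2 * n ->
  cycle_norm (2 * n) (cyc_succ (2 * n) r) = bpred (cycle_norm (2 * n) r) /\
  cycle_norm (2 * n) (cyc_pred (2 * n) r) = bsucc n (cycle_norm (2 * n) r) \/
  cycle_norm (2 * n) (cyc_succ (2 * n) r) = bsucc n (cycle_norm (2 * n) r) /\
  cycle_norm (2 * n) (cyc_pred (2 * n) r) = bpred (cycle_norm (2 * n) r).
Proof.
rewrite /cycle_norm /cyc_succ /cyc_pred /bpred /bsucc => n_gt0 rn.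
by have [|] := ltnP r n; [right|left]; (repeat case: ifP => ?); split; lia.
Qed.

Lemma distn_nbhd n x : 0 < n -> x <= 2 * n ->
  `|bpred x - n| = bpred `|x - n| /\ `|bsucc (2 * n) x - n| = bsucc n `|x - n| \/
  `|bpred x - n| = bsucc n `|x - n| /\ `|bsucc (2 * n) x - n| = bpred `|x - n|.
Proof.
rewrite /bpred /bsucc => n_gt0 xn.
by have [|] := ltnP x n; [right|left]; (repeat case: ifP => ?); split; lia.
Qed.
End Neighbours.

Section PairNeighbourhood.
Variable R : numFieldType.

Lemma sum_pair m (a b : nat) (phi : nat -> R) : (a < m)%N -> (b < m)%N ->
  \sum_(l < m) ((l == a :> nat) || (l == b :> nat))%:R * phi l =
  if a == b then phi a else phi a + phi b.
Proof.
move=> am bm.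
have sum1 c : (c < m)%N -> \sum_(l < m) (l == c :> nat)%:R * phi l = phi c.
  move=> cm; rewrite (bigD1 (Ordinal cm)) //= eqxx mul1r big1 ?addr0 // => l lc.
  rewrite (_ : (l == c :> nat) = false) ?mul0r //.
  by apply: contraNF lc => /eqP lc; apply/eqP/val_inj.
have [<-|ab] := eqVneq a b; first by under eq_bigr => l _ do rewrite orbb; exact: sum1.
rewrite -(sum1 a am) -(sum1 b bm) -big_split /=; apply: eq_bigr => l _.
by have [->|] := eqVneq (l : nat) a; rewrite ?(negbTE ab) /= ?mul0r ?add0r ?addr0.
Qed.

Lemma degree_pair m (G : rel 'I_m) a b i :
  pair_nbhd G a b -> degree R G i = if a i == b i then 1 else 2.
Proof.
move=> /(_ i) [am bm Gi]; rewrite /degree.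
under eq_bigr => l _ do rewrite -[_%:R]mulr1 Gi.
by rewrite (sum_pair (fun=> 1)).
Qed.

Lemma degree_pair_neq0 m (G : rel 'I_m) a b i : pair_nbhd G a b -> degree R G i != 0.
Proof.
by move=> Gab; rewrite (degree_pair i Gab); case: ifP; rewrite ?oner_eq0 ?pnatr_eq0.
Qed.

Lemma trans_mx_pair m (G : rel 'I_m) a b i (phi : nat -> R) : pair_nbhd G a b ->
  \sum_l trans_mx R G i l * phi l = (phi (a i) + phi (b i)) / 2.
Proof.
move=> Gab; have [am bm Gi] := Gab i.
under eq_bigr => l _ do rewrite mxE mulrAC Gi.
rewrite -mulr_suml sum_pair // (degree_pair i Gab).
by case: eqP => [->|_]; rewrite ?divr1 // -mulr2n -(mulr_natr (phi _)) mulfK // pnatr_eq0.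
Qed.

Lemma pair_lumping m p (G : rel 'I_m) (H : rel 'I_p.+1) (a b c d F : nat -> nat) :
  pair_nbhd G a b -> pair_nbhd H c d -> (forall i : 'I_m, F i <= p)%N ->
  (forall i : 'I_m, F (a i) = c (F i) /\ F (b i) = d (F i) \/
                    F (a i) = d (F i) /\ F (b i) = c (F i)) ->
  lumping (trans_mx R G) (trans_mx R H) (fun i => inord (F i)).
Proof.
move=> Gab Hcd Fp Fab i phi.
under [RHS]eq_bigr => u _ do rewrite -[u in phi u]inord_val.
rewrite (trans_mx_pair _ (phi \o inord \o F) Gab).
rewrite (trans_mx_pair _ (phi \o inord) Hcd) /= inordK ?ltnS //.
by case: (Fab i) => -[-> ->]; rewrite // addrC.
Qed.

End PairNeighbourhood.

Section Folding.
Local Open Scope nat_scope.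
Variables (R : numFieldType) (n : nat).

Definition cycle_fold (j i : 'I_(2 * n)) : 'I_n.+1 := inord (cycle_dist (2 * n) i j).
Definition path_fold (x : 'I_(2 * n).+1) : 'I_n.+1 := inord `|x - n|.

Lemma cycle_fold_inj j i : cycle_fold j i = cycle_fold j j -> i = j.
Proof.
have im := ltn_ord i; have jm := ltn_ord j.
rewrite /cycle_fold /cycle_dist /cycle_norm /cycle_offset leqnn.
case: leqP => ji /(congr1 (@nat_of_ord _)); rewrite !inordK; try lia.
all: by move=> ?; apply: ord_inj; lia.
Qed.

Lemma path_fold_inj x : path_fold x = path_fold (inord n) -> x = inord n.
Proof.
have xm := ltn_ord x; have nm : n < (2 * n).+1 by lia.
move/(congr1 (@nat_of_ord _)); rewrite /path_fold !inordK; try lia.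
by move=> ?; apply: ord_inj; rewrite inordK //; lia.
Qed.

Hypothesis n_gt0 : 0 < n.

Lemma lumping_cycle_fold j :
  lumping (trans_mx R (@std_cycle (2 * n))) (trans_mx R (@std_path n.+1)) (cycle_fold j).
Proof.
rewrite /cycle_fold.
apply: (pair_lumping (F := cycle_dist (2 * n) ^~ j) (@std_cycle_nbhd _)
  (std_path_nbhd n_gt0)) => i.
  exact: cycle_dist_le.
have im := ltn_ord i; have jm := ltn_ord j.
rewrite /cycle_dist cycle_offset_succ // cycle_offset_pred //.
by apply: cycle_norm_nbhd => //; rewrite /cycle_offset; case: ifP; lia.
Qed.

Lemma lumping_path_fold :
  lumping (trans_mx R (@std_path (2 * n).+1)) (trans_mx R (@std_path n.+1)) path_fold.
Proof.
have n2_gt0 : 0 < 2 * n by lia.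
rewrite /path_fold.
apply: (pair_lumping (F := fun x => `|x - n|) (std_path_nbhd n2_gt0)
  (std_path_nbhd n_gt0)) => x.
  by have := ltn_ord x; lia.
exact: distn_nbhd n_gt0 (ltn_ord x).
Qed.

End Folding.

Theorem proposition1 (R : realFieldType) (n : nat) (hn : (1 <= n)%N)
    (G : rel 'I_(2 * n)) (G' : rel 'I_(2 * n).+1)
    (hG : is_cycle_graph G) (hG' : is_path_graph G') :
  forall i j : 'I_(2 * n), exists i' j' : 'I_(2 * n).+1,
    forall k : nat, (1 <= k)%N -> rw_mx R G k i j = rw_mx R G' k i' j'.
Proof.
move=> i j; case: hG => s Gs; case: hG' => s' Gs'.
pose d := cycle_dist (2 * n) (s^-1 i)%g (s^-1 j)%g.
exists (s' (inord (n + d))), (s' (inord n)) => k _.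
have n2_gt0 : (0 < 2 * n)%N by lia.
have degG x : degree R G x != 0.
  rewrite -(permKV s x) (degree_relabel R Gs).
  exact: degree_pair_neq0 (@std_cycle_nbhd _).
have degG' x : degree R G' x != 0.
  rewrite -(permKV s' x) (degree_relabel R Gs').
  exact: degree_pair_neq0 (std_path_nbhd n2_gt0).
rewrite !rw_mx_trans //.
rewrite (lumping_expr (lumping_relabel Gs) (fun x => @perm_inj _ _ x j)).
rewrite (lumping_expr (lumping_cycle_fold (R := R) hn _) (@cycle_fold_inj n _)).
rewrite (lumping_expr (lumping_relabel Gs') (fun x => @perm_inj _ _ x _)) !permK.
rewrite (lumping_expr (lumping_path_fold (R := R) hn) (@path_fold_inj n)).
have dn : (d <= n)%N := cycle_dist_le _ _ _.
rewrite /cycle_fold /path_fold -/d /cycle_dist /cycle_offset leqnn subnn /cycle_norm.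
by congr (_ _ _); apply: ord_inj; rewrite !inordK; lia.
Qed.
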